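(* Let $n_0\ge1$ and $n_1=2n_0$. For $\ell\in\{0,1\}$ let $\mathbf{h}^\ell_k\in\mathbb{R}^{n_\ell}$, $k=0,\dots,n_\ell-1$, have entries $(\mathbf{h}^\ell_k)_j=\cos\frac{2(j+\frac12)k\pi}{n_\ell}+\sin\frac{2(j+\frac12)k\pi}{n_\ell}$. Let $\mathbf{P}\in\mathbb{R}^{n_1\times n_0}$ with $\mathbf{P}_{2j,j}=\mathbf{P}_{2j+1,j}=1$ ($j=0,\dots,n_0-1$) and all other entries $0$, let $\mathbf{R}=\mathbf{P}^\top$, and let $\mathbf{S}_1\in\mathbb{R}^{n_1\times n_1}$ be the periodic second-order Shapiro filter, $(\mathbf{S}_1\mathbf{x})_j=\frac14(x_{j-1}+2x_j+x_{j+1})$ with indices taken modulo $n_1$. Set $\bar{\mathbf{P}}:=\mathbf{S}_1\mathbf{P}$, $\bar{\mathbf{R}}:=\mathbf{R}\mathbf{S}_1$ and $c_k:=\cos(k\pi/n_1)$. Then for all $k=0,\dots,n_0-1$: $\bar{\mathbf{P}}\mathbf{h}^0_k=c_k^3\mathbf{h}^1_k-c_{n_0+k}^3\mathbf{h}^1_{n_0+k}$, $\bar{\mathbf{R}}\mathbf{h}^1_k=2c_k^3\mathbf{h}^0_k$, and $\bar{\mathbf{R}}\mathbf{h}^1_{n_0+k}=-2c_{n_0+k}^3\mathbf{h}^0_k$.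
   Context: Indices start at $0$. *)

From HB Require Import structures.
From mathcomp Require Import all_boot all_order all_algebra.
From mathcomp Require Import all_classical all_reals all_analysis.
Set Implicit Arguments. Unset Strict Implicit. Unset Printing Implicit Defensive.
Import Order.TTheory GRing.Theory Num.Theory.
Local Open Scope ring_scope.

Definition hvec (R : realType) (n k : nat) : 'cV[R]_n :=
  \col_(j < n) (cos (2 * (j%:R + 2^-1) * k%:R * pi / n%:R)
              + sin (2 * (j%:R + 2^-1) * k%:R * pi / n%:R)).

Definition Pmat (R : realType) (n0 : nat) : 'M[R]_(n0.*2, n0) :=
  \matrix_(i < n0.*2, j < n0) (if (i./2 == nat_of_ord j)%N then 1 else 0).

Definition Rmat (R : realType) (n0 : nat) : 'M[R]_(n0, n0.*2) := (Pmat R n0)^T.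

Definition Shapiro (R : realType) (n : nat) : 'M[R]_n :=
  \matrix_(i < n, j < n)
    ((if (nat_of_ord j == (i + 1) %% n)%N then 4^-1 else 0)
     + (if (nat_of_ord j == nat_of_ord i)%N then 2^-1 else 0)
     + (if ((j + 1) %% n == nat_of_ord i)%N then 4^-1 else 0)).

Definition ck (R : realType) (n1 k : nat) : R := cos (k%:R * pi / n1%:R).

From HB Require Import structures.
From mathcomp Require Import all_boot all_order all_algebra.
From mathcomp Require Import all_classical all_reals all_analysis.
From mathcomp Require Import ring zify.
Import Order.TTheory GRing.Theory Num.Theory.
Local Open Scope ring_scope.

(* The vectors h^l_K sample Hartley's function cas = cos + sin at the points
   (2j+1) a, where a = K pi / n_l.  Since cas(y + b) + cas(y - b) = 2 cos(b) cas(y),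
   such samples are eigenvectors of the Shapiro filter (b = 2a, eigenvalue
   (1 + cos 2a) / 2 = cos(a)^2), and summing them in pairs (b = a) gives
   R h^1_K = 2 c_K h^0_K; moreover h^0_{n0+k} = -h^0_k.  For the prolongation,
   h^1_{n0+k} is h^1_k with the phase of sample j shifted by (2j+1) pi/2, i.e. by
   pi/2 or -pi/2 modulo 2 pi according to the parity of j, so the addition
   formula for cas gives P h^0_k = c_k h^1_k - c_{n0+k} h^1_{n0+k}. *)

Section Hartley.
Context {R : realType}.

Definition cas (x : R) : R := cos x + sin x.

Lemma casD x y : cas (x + y) = cos y * cas x + sin y * cas (x + pi / 2).
Proof. by rewrite /cas cosD sinD cosDpihalf sinDpihalf; ring. Qed.

Lemma casB x y : cas (x - y) = cos y * cas x + sin y * cas (x - pi / 2).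
Proof. by rewrite /cas cosB sinB cosBpihalf sinBpihalf; ring. Qed.

Lemma casDB x y : cas (x + y) + cas (x - y) = 2 * cos y * cas x.
Proof. by rewrite /cas cosD sinD cosB sinB; ring. Qed.

Lemma casD2pi : periodic cas (pi *+ 2).
Proof. by move=> x; rewrite /cas cosD2pi sinD2pi. Qed.

Lemma casDpi : alternating cas pi.
Proof. by move=> x; rewrite /cas cosDpi sinDpi opprD. Qed.

Lemma cas_Shapiro y a :
  4^-1 * cas (y + a *+ 2) + 2^-1 * cas y + 4^-1 * cas (y - a *+ 2)
  = cos a ^+ 2 * cas y.
Proof.
transitivity (4^-1 * (cas (y + a *+ 2) + cas (y - a *+ 2)) + 2^-1 * cas y).
  by ring.
by rewrite casDB cos_mulr2n; field.
Qed.

Definition cas_sample (a : R) (m : int) : R := cas ((2 * m%:~R + 1) * a).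

Lemma cas_sample_periodic a N K :
  N%:R * a = K%:R * pi -> periodic (cas_sample a) N%:Z.
Proof.
move=> Na m; rewrite /cas_sample -(periodicn casD2pi K ((2 * m%:~R + 1) * a)).
have -> : pi *+ 2 *+ K = 2 * (N%:R * a) by rewrite Na; ring.
by congr cas; rewrite intrD; ring.
Qed.

End Hartley.

Lemma sum_ord_delta (R : pzSemiRingType) N (a : nat) (c : R) (G : nat -> R) :
  (a < N)%N -> \sum_(j < N) (if nat_of_ord j == a then c else 0) * G j = c * G a.
Proof.
move=> a_lt_N; rewrite (bigD1 (Ordinal a_lt_N)) //= eqxx big1 ?addr0 // => j.
by rewrite -val_eqE /= => /negbTE ->; rewrite mul0r.
Qed.

Lemma natr_ord_neq0 (R : numDomainType) {n} (i : 'I_n) : n%:R != 0 :> R.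
Proof. by rewrite pnatr_eq0 -lt0n (leq_ltn_trans _ (ltn_ord i)). Qed.

Lemma periodic_modn {V : zmodType} {F : int -> V} {N : nat} :
  periodic F N%:Z -> forall m : nat, F (m %% N)%N = F m.
Proof.
move=> F_per m; rewrite {2}(divn_eq m N); elim: (m %/ N)%N => [|q IHq].
  by rewrite mul0n.
by rewrite mulSn -addnA addnC PoszD F_per.
Qed.

Lemma half_eq i j : (i./2 == j)%N = (i == j.*2)%N || (i == j.*2.+1)%N.
Proof. by apply/eqP/orP; lia. Qed.

Lemma succ_modn_eq N (i j : 'I_N) :
  ((j + 1) %% N == i)%N = (nat_of_ord j == (i + N.-1) %% N)%N.
Proof.
have N_gt0 : (0 < N)%N by apply: leq_ltn_trans (ltn_ord i).
rewrite -[in LHS](modn_small (ltn_ord i)) -[in RHS](modn_small (ltn_ord j)).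
by rewrite -[in RHS](eqn_modDr 1) -addnA (addn1 N.-1) prednK // modnDr.
Qed.

Section GridOperators.
Variable R : realType.

Lemma mulmx_Pmat_col n0 (F : int -> R) :
  Pmat R n0 *m \col_(j < n0) F j = \col_(i < n0.*2) F i./2.
Proof.
apply/matrixP => i z; rewrite !mxE.
under eq_bigr => j _ do rewrite !mxE eq_sym.
by rewrite (sum_ord_delta _ _ _ _ (fun m : nat => F m)) ?mul1r // ltn_half_double.
Qed.

Lemma mulmx_Rmat_col n0 (F : int -> R) :
  Rmat R n0 *m \col_(j < n0.*2) F j = \col_(i < n0) (F i.*2 + F i.*2.+1).
Proof.
apply/matrixP => i z; rewrite !mxE.
have i_lt := ltn_ord i.
under eq_bigr => j _ do rewrite !mxE half_eq.
transitivity (\sum_(j < n0.*2) ((if nat_of_ord j == i.*2 then 1 else 0) * F j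
   + (if nat_of_ord j == i.*2.+1 then 1 else 0) * F j)).
  apply: eq_bigr => j _.
  by case: eqP => [->|_]; case: eqP => //= [|_]; rewrite ?mul0r ?addr0 ?add0r //; lia.
by rewrite big_split /= !(sum_ord_delta _ _ _ _ (fun m : nat => F m)) ?mul1r //; lia.
Qed.

Lemma mulmx_Shapiro_col N (F : int -> R) : periodic F N%:Z ->
  Shapiro R N *m \col_(j < N) F j
  = \col_(i < N) (4^-1 * F (i%:Z + 1) + 2^-1 * F i + 4^-1 * F (i%:Z - 1)).
Proof.
move=> F_per; apply/matrixP => i z; rewrite !mxE.
have N_gt0 : (0 < N)%N by apply: leq_ltn_trans (ltn_ord i).
under eq_bigr => j _ do rewrite !mxE !mulrDl succ_modn_eq.
rewrite !big_split /= !(sum_ord_delta _ _ _ _ (fun m : nat => F m)) ?ltn_mod //.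
rewrite !(periodic_modn F_per).
have -> : Posz (i + N.-1)%N = i%:Z - 1 + N%:Z by lia.
by rewrite F_per.
Qed.

Lemma hvecE n K : hvec R n K = \col_(j < n) cas_sample (K%:R * pi / n%:R) j.
Proof.
apply/matrixP => i j; rewrite !mxE /cas_sample /cas.
by congr (cos _ + sin _); field; exact: natr_ord_neq0 i.
Qed.

Lemma hvecDn n K : hvec R n (n + K) = - hvec R n K.
Proof.
rewrite !hvecE; apply/matrixP => j z; rewrite !mxE /cas_sample.
rewrite -casDpi -(periodicn casD2pi j (_ + pi)); congr cas.
by rewrite natrD; field; exact: natr_ord_neq0 j.
Qed.

Lemma Shapiro_hvec N K : Shapiro R N *m hvec R N K = ck R N K ^+ 2 *: hvec R N K.
Proof.
rewrite hvecE; apply/matrixP => i z; have N_neq0 := natr_ord_neq0 R i.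
rewrite mulmx_Shapiro_col; last by apply: (cas_sample_periodic _ _ K); rewrite mulrC divfK.
rewrite !mxE /cas_sample /ck -cas_Shapiro.
by congr (_ * cas _ + _ + _ * cas _); rewrite ?intrD ?intrB; ring.
Qed.

Lemma Rmat_hvec n0 K :
  Rmat R n0 *m hvec R n0.*2 K = (2 * ck R n0.*2 K) *: hvec R n0 K.
Proof.
rewrite !hvecE mulmx_Rmat_col; apply/matrixP => i z; rewrite !mxE /cas_sample /ck.
have n0_neq0 := natr_ord_neq0 R i.
by rewrite -casDB addrC; congr (cas _ + cas _); rewrite -!mul2n natrM; field.
Qed.

Lemma Pmat_hvec n0 k :
  Pmat R n0 *m hvec R n0 k
  = ck R n0.*2 k *: hvec R n0.*2 k - ck R n0.*2 (n0 + k) *: hvec R n0.*2 (n0 + k).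
Proof.
rewrite !hvecE mulmx_Pmat_col; apply/matrixP => i z; rewrite !mxE /cas_sample /ck.
have n0_neq0 : n0%:R != 0 :> R.
  by rewrite pnatr_eq0 -lt0n -double_gt0 (leq_ltn_trans _ (ltn_ord i)).
set a : R := k%:R * pi / n0.*2%:R.
have -> : (n0 + k)%:R * pi / n0.*2%:R = a + pi / 2.
  by rewrite /a -mul2n natrD natrM; field.
have -> : k%:R * pi / n0%:R = a *+ 2 by rewrite /a -mul2n natrM; field.
rewrite cosDpihalf mulNr opprK; case: i => j _ /=.
have [m [->|->]] : exists m, j = m.*2 \/ j = m.*2.+1 by exists j./2; lia.
- set y : R := (2 * (m.*2)%:~R + 1) * a.
  have -> : (2 * (m.*2)%:~R + 1) * (a + pi / 2) = y + pi / 2 + pi *+ 2 *+ m.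
    by rewrite /y -mul2n; field.
  rewrite (periodicn casD2pi) -casD doubleK.
  by congr cas; rewrite /y -mul2n; ring.
- set y : R := (2 * (m.*2.+1)%:~R + 1) * a.
  have -> : (2 * (m.*2.+1)%:~R + 1) * (a + pi / 2) = y - pi / 2 + pi *+ 2 *+ m.+1.
    by rewrite /y -mul2n; field.
  rewrite (periodicn casD2pi) -casB /= uphalf_double.
  by congr cas; rewrite /y -mul2n; ring.
Qed.

End GridOperators.

Theorem mainTheorem11 (R : realType) (n0 : nat) (hn0 : (1 <= n0)%N) :
  forall k : nat, (k < n0)%N ->
    [/\ (Shapiro R n0.*2 *m Pmat R n0) *m hvec R n0 k
          = (ck R n0.*2 k) ^+ 3 *: hvec R n0.*2 k
            - (ck R n0.*2 (n0 + k)) ^+ 3 *: hvec R n0.*2 (n0 + k),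
        (Rmat R n0 *m Shapiro R n0.*2) *m hvec R n0.*2 k
          = (2 * (ck R n0.*2 k) ^+ 3) *: hvec R n0 k
      & (Rmat R n0 *m Shapiro R n0.*2) *m hvec R n0.*2 (n0 + k)
          = (- 2 * (ck R n0.*2 (n0 + k)) ^+ 3) *: hvec R n0 k].
Proof.
move=> k _; split.
- by rewrite -mulmxA Pmat_hvec mulmxBr -!scalemxAr !Shapiro_hvec !scalerA -!exprS.
- rewrite -mulmxA Shapiro_hvec -scalemxAr Rmat_hvec scalerA.
  by congr (_ *: _); ring.
- rewrite -mulmxA Shapiro_hvec -scalemxAr Rmat_hvec hvecDn !scalerN scalerA -scaleNr.
  by congr (_ *: _); ring.
Qed.
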